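(* Let $X=(X,d,\mu)$ be a metric measure space with $\mu$ uniformly locally doubling, and let $\theta\ge0$. Then $\mathcal{ADR}_\theta(X)\subset\mathcal{LCR}_\theta(X)$.
   Context: A metric measure space is a triple $X=(X,d,\mu)$ with $(X,d)$ a complete separable metric space and $\mu$ a Borel regular measure with $0<\mu(B)<\infty$ for every ball $B$ and $\operatorname{supp}\mu=X$. All balls are closed: $B_r(x)=\{y:d(x,y)\le r\}$. $\mu$ is uniformly locally doubling if for every $R>0$, $\sup_{r\in(0,R]}\sup_{x}\mu(B_{2r}(x))/\mu(B_r(x))<\infty$. For $\theta\ge0$, $E\subset X$, $\delta\in(0,\infty]$: $\mathcal H_{\theta,\delta}(E)=\inf\{\sum_i\mu(B_{r_i}(x_i))/r_i^\theta:E\subset\bigcup_iB_{r_i}(x_i),\ r_i<\delta\}$ (at most countable coverings by balls), $\mathcal H_\theta(E)=\lim_{\delta\to0}\mathcal H_{\theta,\delta}(E)$. $S\in\mathcal{ADR}_\theta(X)$ (codimension-$\theta$ Ahlfors–David regular) if there are $c_1,c_2>0$ with $c_1\mu(B_r(x))/r^\theta\le\mathcal H_\theta(B_r(x)\cap S)\le c_2\mu(B_r(x))/r^\theta$ for all $x\in S$, $r\in(0,1]$. $S\in\mathcal{LCR}_\theta(X)$ (lower codimension-$\theta$ content regular) if there is $\lambda>0$ with $\mathcal H_{\theta,r}(B_r(x)\cap S)\ge\lambda\mu(B_r(x))/r^\theta$ for all $x\in S$, $r\in(0,1]$. *)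

From HB Require Import structures.
From mathcomp Require Import all_boot all_order all_algebra.
From mathcomp Require Import all_classical all_reals all_analysis.
Set Implicit Arguments. Unset Strict Implicit. Unset Printing Implicit Defensive.
Import Order.TTheory GRing.Theory Num.Theory.
Local Open Scope classical_set_scope.
Local Open Scope ring_scope.

Section MMS.
Variables (R : realType) (T : Type) (d : T -> T -> R).

Definition cball (x : T) (r : R) : set T := [set y | d x y <= r].
Definition oball (x : T) (r : R) : set T := [set y | d x y < r].

Definition is_metric : Prop :=
  [/\ forall x y, 0 <= d x y,
      forall x y, d x y = 0 <-> x = y,
      forall x y, d x y = d y x &
      forall x y z, d x z <= d x y + d y z].

Definition d_complete : Prop :=
  forall u : nat -> T,
    (forall e, 0 < e -> exists N, forall m n, (N <= m)%N -> (N <= n)%N -> d (u m) (u n) < e) ->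
    exists l, forall e, 0 < e -> exists N, forall n, (N <= n)%N -> d (u n) l < e.

Definition d_separable : Prop :=
  exists D : set T, countable D /\
    forall x e, 0 < e -> exists2 y, D y & d x y < e.

Definition d_open (A : set T) : Prop :=
  forall x, A x -> exists2 e, 0 < e & oball x e `<=` A.

Definition d_borel (A : set T) : Prop := <<s d_open >> A.

Variable mu : set T -> \bar R.

Definition is_outer_measure : Prop :=
  [/\ mu set0 = 0%E,
      forall A, (0 <= mu A)%E,
      forall A B, A `<=` B -> (mu A <= mu B)%E &
      forall A : nat -> set T, (mu (\bigcup_n A n) <= \sum_(0 <= n <oo) mu (A n))%E].

Definition borel_regular : Prop :=
  (forall A, d_borel A -> forall E, mu E = (mu (E `&` A) + mu (E `\` A))%E) /\
  (forall A, exists B, [/\ d_borel B, A `<=` B & mu B = mu A]).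

Definition support : set T :=
  [set x | forall U, d_open U -> U x -> (0 < mu U)%E].

Definition metric_measure_space : Prop :=
  [/\ is_metric, d_complete & d_separable] /\
  [/\ is_outer_measure, borel_regular,
      (forall x r, 0 < r -> (0 < mu (cball x r))%E /\ (mu (cball x r) < +oo)%E) &
      support = setT].

Definition uniformly_locally_doubling : Prop :=
  forall Rad, 0 < Rad -> exists C : R, forall r x, 0 < r -> r <= Rad ->
    (mu (cball x (2 * r)) <= C%:E * mu (cball x r))%E.

Definition hcontent (theta delta : R) (E : set T) : \bar R :=
  ereal_inf [set s | exists (J : set nat) (x : nat -> T) (r : nat -> R),
    [/\ (forall i, J i -> 0 < r i /\ r i < delta),
        E `<=` \bigcup_(i in J) cball (x i) (r i) &
        s = \esum_(i in J) (mu (cball (x i) (r i)) * ((r i `^ theta)^-1)%:E)%E]].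

Definition hmeasure (theta : R) (E : set T) : \bar R :=
  lim ((fun delta => hcontent theta delta E) @ 0^'+).

Definition ADR (theta : R) (S : set T) : Prop :=
  exists c1 c2 : R, [/\ 0 < c1, 0 < c2 &
    forall x r, S x -> 0 < r -> r <= 1 ->
      ((c1 / r `^ theta)%:E * mu (cball x r) <= hmeasure theta (cball x r `&` S))%E /\
      (hmeasure theta (cball x r `&` S) <= (c2 / r `^ theta)%:E * mu (cball x r))%E].

Definition LCR (theta : R) (S : set T) : Prop :=
  exists lambda : R, 0 < lambda /\
    forall x r, S x -> 0 < r -> r <= 1 ->
      ((lambda / r `^ theta)%:E * mu (cball x r) <= hcontent theta r (cball x r `&` S))%E.

End MMS.

From HB Require Import structures.
From mathcomp Require Import all_boot all_order all_algebra.
From mathcomp Require Import all_classical all_reals all_analysis.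
From mathcomp Require Import lra.
Set Implicit Arguments. Unset Strict Implicit. Unset Printing Implicit Defensive.
Import Order.TTheory GRing.Theory Num.Theory.
Local Open Scope classical_set_scope.
Local Open Scope ring_scope.

(* Let x be in S, r <= 1, and cover B_r(x) \cap S by balls B_i of radii r_i < r.
   If some B_i with r_i >= r/4 meets B_r(x) \cap S, then B_r(x) lies in the ball
   of radius 16 r_i around its centre, so doubling gives
   mu(B_r(x))/r^theta <= C^4 mu(B_i)/r_i^theta.  Otherwise every B_i meeting
   B_r(x) \cap S at some y satisfies B_i \cap S \subset B_{2 r_i}(y) \cap S, whose
   H_theta-measure is at most c2 C^2 mu(B_i)/r_i^theta by the upper ADR bound and
   doubling; subadditivity of H_theta and the lower ADR bound then give
   c1 mu(B_r(x))/r^theta <= 2 c2 C^2 sum_i mu(B_i)/r_i^theta. *)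

Lemma ler_pdiv (F : realFieldType) (a b p q : F) :
  0 <= a -> 0 < p -> a <= b -> p <= q -> a / q <= b / p.
Proof.
move=> a0 p0 ab pq; have q0 : 0 < q by exact: lt_le_trans pq.
apply: ler_pM => //; first by rewrite invr_ge0 ltW.
by rewrite lef_pV2 // posrE.
Qed.

Lemma esumZl_le (R : realType) (J : set nat) (a : nat -> \bar R) (k : R) :
  0 <= k -> (forall i, J i -> (0 <= a i)%E) ->
  (\esum_(i in J) (k%:E * a i) <= k%:E * \esum_(i in J) a i)%E.
Proof.
move=> k0 a0; apply: ge_ereal_sup => _ [X [finX XJ] <-].
rewrite fsbig_finite //= big_seq -ge0_sume_distrr; last first.
  by move=> i; rewrite in_fset_set // inE => /XJ /a0.
rewrite -big_seq -fsbig_finite //; apply: lee_wpmul2l; first by rewrite lee_fin.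
by apply: ereal_sup_ubound; exists X.
Qed.

Section HausdorffContent.
Variables (R : realType) (T : Type) (d : T -> T -> R) (mu : set T -> \bar R).
Variable theta : R.
Hypothesis mu_ge0 : forall A, (0 <= mu A)%E.

Definition ball_weight (x : T) (r : R) : \bar R :=
  (mu (cball d x r) * ((r `^ theta)^-1)%:E)%E.

Lemma ball_weight_ge0 x r : (0 <= ball_weight x r)%E.
Proof. by apply: mule_ge0 => //; rewrite lee_fin invr_ge0 powR_ge0. Qed.

Lemma hcontentS delta A B : A `<=` B ->
  (hcontent d mu theta delta A <= hcontent d mu theta delta B)%E.
Proof.
move=> AB; apply: le_ereal_inf_tmp => s [J [x [r [Hr HB ->]]]].
by apply: ereal_inf_lbound; exists J, x, r; split => //; exact: subset_trans HB.
Qed.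

Lemma hcontent_nonincreasing A : {in Interval (BRight (0:R)) (BInfty _ false) &,
  nonincreasing_fun (fun delta => hcontent d mu theta delta A)}.
Proof.
move=> a b _ _ ab; apply: le_ereal_inf_tmp => s [J [x [r [Hr HB ->]]]].
apply: ereal_inf_lbound; exists J, x, r; split => //.
by move=> i /Hr [r0 ra]; split => //; exact: lt_le_trans ab.
Qed.

Lemma hmeasureE A : hmeasure d mu theta A =
  ereal_sup [set hcontent d mu theta delta A | delta in
    [set` Interval (BRight (0:R)) (BInfty _ false)]].
Proof.
apply: cvg_lim => //; apply: nonincreasing_at_right_cvge => //.
exact: hcontent_nonincreasing.
Qed.

Lemma hcontent_le_hmeasure delta A : 0 < delta ->
  (hcontent d mu theta delta A <= hmeasure d mu theta A)%E.
Proof.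
move=> delta0; rewrite hmeasureE; apply: ereal_sup_ubound; exists delta => //=.
by rewrite in_itv /= delta0.
Qed.

Lemma hmeasure_le A L :
  (forall delta, 0 < delta -> (hcontent d mu theta delta A <= L)%E) ->
  (hmeasure d mu theta A <= L)%E.
Proof.
move=> HL; rewrite hmeasureE; apply: ge_ereal_sup => _ [delta /= + <-].
by rewrite in_itv /= andbT => /HL.
Qed.

Lemma hmeasureS A B : A `<=` B ->
  (hmeasure d mu theta A <= hmeasure d mu theta B)%E.
Proof.
move=> AB; apply: hmeasure_le => delta delta0.
exact: le_trans (hcontentS delta AB) (hcontent_le_hmeasure B delta0).
Qed.

(* The covers of the pieces are concatenated, the pairs (piece, ball) being
   reindexed through [pickle]. *)
Lemma hcontent_le_esum_covers (x0 : T) delta (E : set T) (J : set nat)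
    (F : nat -> set T) (b : nat -> \bar R) :
  E `<=` \bigcup_(i in J) F i ->
  (forall i, J i -> exists (Ji : set nat) (xi : nat -> T) (ri : nat -> R),
    [/\ forall j, Ji j -> 0 < ri j /\ ri j < delta,
        F i `<=` \bigcup_(j in Ji) cball d (xi j) (ri j) &
        (\esum_(j in Ji) ball_weight (xi j) (ri j) <= b i)%E]) ->
  (hcontent d mu theta delta E <= \esum_(i in J) b i)%E.
Proof.
move=> EF HF.
pose Q i (c : set nat * (nat -> T) * (nat -> R)) :=
  [/\ forall j, c.1.1 j -> 0 < c.2 j /\ c.2 j < delta,
      F i `<=` \bigcup_(j in c.1.1) cball d (c.1.2 j) (c.2 j) &
      (\esum_(j in c.1.1) ball_weight (c.1.2 j) (c.2 j) <= b i)%E].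
have [f Hf] : {f : nat -> set nat * (nat -> T) * (nat -> R) &
    forall i, J i -> Q i (f i)}.
  apply: (@boolp.choice _ _ (fun i c => J i -> Q i c)) => i.
  have [Ji|NJi] := boolp.pselect (J i); last first.
    by exists (set0, (fun _ => x0), (fun _ => 1)).
  by have [Ji' [xi [ri Hi]]] := HF i Ji; exists (Ji', xi, ri).
pose P := J `*`` (fun i => (f i).1.1).
pose x' n := if unpickle n is Some k then (f k.1).1.2 k.2 else x0.
pose r' n := if unpickle n is Some k then (f k.1).2 k.2 else 1.
apply: ge_ereal_inf; exists (\esum_(n in pickle @` P) ball_weight (x' n) (r' n)).
  exists (pickle @` P), x', r'; split => //.
  - move=> n [k [Jk1 Jk2] <-]; rewrite /x' /r' pickleK.
    by have [H _ _] := Hf _ Jk1; exact: H.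
  - move=> z /EF [i Ji Fiz]; have [_ H _] := Hf i Ji.
    have [j Jj zj] := H z Fiz.
    by exists (pickle (i, j)); [exists (i, j)|rewrite /x' /r' pickleK].
rewrite esum_image; last by move=> u v _ _; exact: (pcan_inj pickleK).
rewrite /x' /r'; under eq_esum do rewrite pickleK.
rewrite -(@esum_esum _ _ _ J (fun i => (f i).1.1)
  (fun i j => ball_weight ((f i).1.2 j) ((f i).2 j))); last first.
  by move=> i j _ _; exact: ball_weight_ge0.
by apply: le_esum => i Ji; have [] := Hf i Ji.
Qed.

End HausdorffContent.

Section DoublingBalls.
Variables (R : realType) (T : Type) (d : T -> T -> R) (mu : set T -> \bar R).
Variables (theta C : R).
Hypothesis d_sym : forall x y, d x y = d y x.
Hypothesis d_triangle : forall x y z, d x z <= d x y + d y z.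
Hypothesis mu_ge0 : forall A, (0 <= mu A)%E.
Hypothesis mu_mono : forall A B, A `<=` B -> (mu A <= mu B)%E.
Hypothesis mu_cball_fin_gt0 : forall x r, 0 < r ->
  (0 < mu (cball d x r))%E /\ (mu (cball d x r) < +oo)%E.
Hypothesis theta_ge0 : 0 <= theta.
Hypothesis C_ge1 : 1 <= C.
Hypothesis mu_cball_doubling : forall r x, 0 < r -> r <= 8 ->
  (mu (cball d x (2 * r)) <= C%:E * mu (cball d x r))%E.

Let C_gt0 : 0 < C. Proof. exact: lt_le_trans ltr01 C_ge1. Qed.

Lemma cball_subset x y r s : d x y + r <= s -> cball d y r `<=` cball d x s.
Proof.
move=> H z; rewrite /cball /= => yz.
by apply: le_trans (d_triangle x y z) _; apply: le_trans H; rewrite lerD2l.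
Qed.

Lemma mu_cball_iter n x r : 0 < r -> r * 2 ^+ n <= 16 ->
  (mu (cball d x (r * 2 ^+ n)) <= (C ^+ n)%:E * mu (cball d x r))%E.
Proof.
move=> r0; elim: n => [|n IH]; first by rewrite !expr0 mulr1 mul1e.
rewrite exprS mulrCA => H.
have rn0 : 0 < r * 2 ^+ n by rewrite mulr_gt0 // exprn_gt0.
apply: le_trans (mu_cball_doubling x rn0 ltac:(lra)) _.
rewrite exprS EFinM -muleA; apply: lee_wpmul2l; first by rewrite lee_fin ltW.
by apply: IH; lra.
Qed.

Lemma mu_cball_le n x y r s : 0 < s -> s * 2 ^+ n <= 16 ->
  d y x + r <= s * 2 ^+ n ->
  (mu (cball d x r) <= (C ^+ n)%:E * mu (cball d y s))%E.
Proof.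
move=> s0 s16 yx; apply: le_trans (@mu_cball_iter n y s s0 s16).
by apply: mu_mono; exact: cball_subset.
Qed.

Lemma ball_weight_lt a b x r : 0 < r -> a < b ->
  (a%:E * ball_weight d mu theta x r < b%:E * ball_weight d mu theta x r)%E.
Proof.
move=> r0 ab; have [mu_gt0 mu_fin] := mu_cball_fin_gt0 x r0.
have rt0 : 0 < (r `^ theta)^-1 by rewrite invr_gt0 powR_gt0.
rewrite lte_pmul2r ?lte_fin // /ball_weight.
  by rewrite fin_numM // ge0_fin_numE // ltW.
by rewrite mule_gt0 // lte_fin.
Qed.

(* Four doublings of [cball d z s] swallow [cball d x r]. *)
Lemma ball_weight_large x y z r s : 0 < s -> s < r -> r <= 4 * s -> r <= 1 ->
  cball d x r y -> cball d z s y ->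
  (((C ^+ 4)^-1 / r `^ theta)%:E * mu (cball d x r) <= ball_weight d mu theta z s)%E.
Proof.
rewrite /cball /= => s0 sr r4s r1 xy zy.
have e16 : (2:R) ^+ 4 = 16 by rewrite !exprS expr0; lra.
have Hmu : (mu (cball d x r) <= (C ^+ 4)%:E * mu (cball d z s))%E.
  apply: mu_cball_le => //; rewrite e16; first lra.
  by have := d_triangle z y x; rewrite (d_sym y x); lra.
have C4 : 0 < C ^+ 4 by rewrite exprn_gt0.
have r0 : 0 < r := lt_trans s0 sr.
have rt0 : 0 < r `^ theta by rewrite powR_gt0.
apply: le_trans (lee_wpmul2l _ Hmu) _.
  by rewrite lee_fin divr_ge0 ?invr_ge0 ?ltW.
rewrite muleA -EFinM /ball_weight [X in (_ <= X)%E]muleC.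
apply: lee_wpmul2r => //.
rewrite lee_fin mulrAC mulVf ?gt_eqF // mul1r lef_pV2 ?posrE ?powR_gt0 //.
by apply: ge0_ler_powR; rewrite // ?nnegrE ltW.
Qed.

Section UpperRegular.
Variables (c2 : R) (S : set T).
Hypothesis c2_gt0 : 0 < c2.
Hypothesis hmeasure_cball_le : forall y s, S y -> 0 < s -> s <= 1 ->
  (hmeasure d mu theta (cball d y s `&` S) <= (c2 / s `^ theta)%:E * mu (cball d y s))%E.

Lemma hmeasure_small_ball y z s : S y -> 0 < s -> 4 * s <= 1 -> cball d z s y ->
  (hmeasure d mu theta (cball d z s `&` S) <=
    (c2 * C ^+ 2)%:E * ball_weight d mu theta z s)%E.
Proof.
rewrite /cball /= => Sy s0 s4 zy.
have s20 : 0 < 2 * s by rewrite mulr_gt0.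
have e4 : (2:R) ^+ 2 = 4 by rewrite !exprS expr0; lra.
apply: le_trans (hmeasureS d mu theta (_ : _ `<=` cball d y (2 * s) `&` S)) _.
  move=> w [/= zw Sw]; split => //; rewrite /cball /=.
  by have := d_triangle y z w; rewrite (d_sym y z); lra.
apply: le_trans (hmeasure_cball_le Sy s20 ltac:(lra)) _.
have Hmu : (mu (cball d y (2 * s)) <= (C ^+ 2)%:E * mu (cball d z s))%E.
  by apply: mu_cball_le => //; rewrite e4; lra.
have st0 : 0 < s `^ theta by rewrite powR_gt0.
apply: le_trans (lee_wpmul2l _ Hmu) _.
  by rewrite lee_fin divr_ge0 ?powR_ge0 ?ltW.
rewrite muleA -EFinM /ball_weight [X in (_ <= X)%E]muleCA -EFinM.
rewrite [X in (_ <= X)%E]muleC.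
apply: lee_wpmul2r => //; rewrite lee_fin mulrAC.
apply: ler_pdiv => //; first by rewrite mulr_ge0 ?exprn_ge0 ?ltW.
by apply: ge0_ler_powR; rewrite // ?nnegrE ?ltW //; lra.
Qed.

(* The factor 2 leaves room for a strict inequality, from which near-optimal
   covers of the pieces are extracted. *)
Lemma hmeasure_le_small_cover x r (J : set nat) (xs : nat -> T) (rs : nat -> R) :
  0 < r -> r <= 1 ->
  (forall i, J i -> 0 < rs i) ->
  cball d x r `&` S `<=` \bigcup_(i in J) cball d (xs i) (rs i) ->
  (forall i y, J i -> (cball d x r `&` S) y -> cball d (xs i) (rs i) y -> rs i < r / 4) ->
  (hmeasure d mu theta (cball d x r `&` S) <=
    (2 * (c2 * C ^+ 2))%:E * \esum_(i in J) ball_weight d mu theta (xs i) (rs i))%E.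
Proof.
set E := cball d x r `&` S => r0 r1 rs0 cover small.
have K0 : 0 < c2 * C ^+ 2 by rewrite mulr_gt0 // exprn_gt0.
apply: hmeasure_le => delta delta0.
have K2 : 0 <= 2 * (c2 * C ^+ 2) by rewrite mulr_ge0 ?ltW.
apply: le_trans (esumZl_le K2 (fun i _ => ball_weight_ge0 d theta mu_ge0 _ _)).
apply: (hcontent_le_esum_covers mu_ge0 x (F := fun i => cball d (xs i) (rs i) `&` E)).
  by move=> w Ew; have [i Ji wi] := cover w Ew; exists i.
move=> i Ji.
have [[y [yi Ey]]|] := boolp.pselect (exists y, cball d (xs i) (rs i) y /\ E y).
  have lt_weight : (hcontent d mu theta delta (cball d (xs i) (rs i) `&` E) <
      (2 * (c2 * C ^+ 2))%:E * ball_weight d mu theta (xs i) (rs i))%E.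
    apply: le_lt_trans (ball_weight_lt _ (rs0 i Ji) (_ : c2 * C ^+ 2 < _)); last lra.
    have sub : cball d (xs i) (rs i) `&` E `<=` cball d (xs i) (rs i) `&` S.
      by move=> w [wi [_ Sw]].
    apply: le_trans (hcontentS d mu theta delta sub) _.
    apply: le_trans (hcontent_le_hmeasure d mu theta _ delta0) _.
    have := small i y Ji Ey yi; case: Ey => _ Sy ri.
    by apply: hmeasure_small_ball Sy (rs0 i Ji) _ yi; lra.
  have [_ [Ji' [xi [ri [Hri Hcovi ->]]]] lt_cover] := ereal_inf_lt lt_weight.
  by exists Ji', xi, ri; split => //; exact: ltW.
move=> disjoint; exists set0, (fun _ => x), (fun _ => 1); split => //.
- by move=> w [wi Ew]; exfalso; apply: disjoint; exists w.
- rewrite esum_set0; apply: mule_ge0; first by rewrite lee_fin.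
  exact: ball_weight_ge0.
Qed.

End UpperRegular.

Lemma ADR_subset_LCR : ADR d mu theta `<=` LCR d mu theta.
Proof.
move=> S [c1 [c2 [c1_gt0 c2_gt0 HS]]].
pose K := c2 * C ^+ 2.
have K0 : 0 < K by rewrite mulr_gt0 // exprn_gt0.
pose lam := Num.min ((C ^+ 4)^-1) (c1 / (2 * K)).
have lam_gt0 : 0 < lam by rewrite lt_min invr_gt0 exprn_gt0 //= divr_gt0 // mulr_gt0.
exists lam; split => // x r Sx r0 r1.
apply: le_ereal_inf_tmp => _ [J [xs [rs [Hrs cover ->]]]].
set sw := \esum_(i in J) _.
have [[i [Ji ri [y [xy [Sy iy]]]]]|small] := boolp.pselect (exists i, [/\ J i,
    r / 4 <= rs i & exists y, cball d x r y /\ S y /\ cball d (xs i) (rs i) y]).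
  have [rs0 rsr] := Hrs i Ji.
  apply: le_trans (_ : ball_weight d mu theta (xs i) (rs i) <= sw)%E.
    apply: le_trans (ball_weight_large rs0 rsr _ r1 xy iy); last lra.
    apply: lee_wpmul2r => //; rewrite lee_fin ler_wpM2r ?ge_min ?lexx //.
    by rewrite invr_ge0 powR_ge0.
  apply: esum_ge; exists [set i]; first by split; [exact: finite_set1|move=> _ ->].
  by rewrite fsbig_set1.
have small_radius i z : J i -> (cball d x r `&` S) z -> cball d (xs i) (rs i) z ->
    rs i < r / 4.
  move=> Ji [xz Sz] iz; rewrite ltNge; apply/negP => h.
  by apply: small; exists i; split => //; exists z.
have Hup := hmeasure_le_small_cover c2_gt0
  (fun y s Sy s0 s1 => proj2 (HS y s Sy s0 s1))
  r0 r1 (fun i Ji => proj1 (Hrs i Ji)) cover small_radius.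
have [Hlow _] := HS x r Sx r0 r1.
have sw_ge0 : (0 <= sw)%E by apply: esum_ge0 => i _; exact: ball_weight_ge0.
have -> : lam / r `^ theta = lam / c1 * (c1 / r `^ theta).
  by rewrite mulrA divfK ?gt_eqF.
rewrite EFinM -muleA; apply: le_trans (lee_wpmul2l _ (le_trans Hlow Hup)) _.
  by rewrite lee_fin divr_ge0 ?ltW.
rewrite muleA -EFinM gee_pMl // lee_fin mulrAC ler_pdivrMr // mul1r -ler_pdivlMr.
  by rewrite ge_min lexx orbT.
by rewrite mulr_gt0.
Qed.

End DoublingBalls.

Theorem mainTheorem7 (R : realType) (T : Type) (d : T -> T -> R)
    (mu : set T -> \bar R) (theta : R) :
  metric_measure_space d mu ->
  uniformly_locally_doubling d mu ->
  0 <= theta ->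
  ADR d mu theta `<=` LCR d mu theta.
Proof.
move=> [[[_ _ d_sym d_triangle] _ _] [[_ mu_ge0 mu_mono _] _ mu_cball_fin_gt0 _]].
move=> doubling theta_ge0.
have [C0 HC0] := doubling 8 ltac:(lra).
have C_ge1 : 1 <= Num.max C0 1 by rewrite le_max lexx orbT.
apply: (ADR_subset_LCR d_sym d_triangle mu_ge0 mu_mono mu_cball_fin_gt0 theta_ge0 C_ge1).
move=> r x r0 r8; apply: le_trans (HC0 r x r0 r8) _.
by apply: lee_wpmul2r => //; rewrite lee_fin le_max lexx.
Qed.
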